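(* Let $r,s,t$ be integers with $1\le r\le s\le t$ and $n=r+s+t+1$. Then the $(2r+1)$-fault diameter of the exchanged 3-ary $n$-cube satisfies $D^{f}_{2r+1}(E3C(r,s,t))\ge r+s+t+4=n+3$.
   Context: The exchanged 3-ary $n$-cube $E3C(r,s,t)$ ($r,s,t\ge1$, $n=r+s+t+1$): vertices are strings $x=x[r+s+t]\cdots x[1]x[0]$ with all $x[i]\in\{0,1,2\}$, written $x=ABCd$ where $A=x[r+s+t]\cdots x[s+t+1]\in\{0,1,2\}^r$, $B=x[s+t]\cdots x[t+1]\in\{0,1,2\}^s$, $C=x[t]\cdots x[1]\in\{0,1,2\}^t$, $d=x[0]$. Two distinct vertices $x=ABCd$, $y=A'B'C'd'$ are adjacent iff one of: (E0) $A=A',B=B',C=C'$ and $d\ne d'$; (E1) $d=d'=0$, $A=A'$, $B=B'$ and $C,C'$ differ in exactly one position; (E2) $d=d'=1$, $A=A'$, $C=C'$ and $B,B'$ differ in exactly one position; (E3) $d=d'=2$, $B=B'$, $C=C'$ and $A,A'$ differ in exactly one position. For a connected graph $G$ and positive integer $\alpha\le\kappa(G)-1$ ($\kappa$ = vertex connectivity), the $\alpha$-fault diameter is $D^f_\alpha(G)=\max\{d_{G-F}(u,v): u\ne v\in V(G),\ F\subseteq V(G)\setminus\{u,v\},\ |F|=\alpha\}$, where $d_{G-F}$ is the shortest-path distance in $G-F$. (It is known that $\kappa(E3C(r,s,t))=2r+2$ when $r\le s\le t$.) *)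

From mathcomp Require Import all_boot.
Set Implicit Arguments. Unset Strict Implicit. Unset Printing Implicit Defensive.

Fixpoint reach (T : finType) (adj : rel T) (F : {set T}) (u : T) (k : nat)
  : {set T} :=
  match k with
  | 0 => if u \in F then set0 else [set u]
  | k'.+1 => reach adj F u k' :|:
             [set y | (y \notin F) && [exists x in reach adj F u k', adj x y]]
  end.

Definition fdist (T : finType) (adj : rel T) (F : {set T}) (u v : T) : nat :=
  find (fun k => v \in reach adj F u k) (iota 0 #|T|).

Definition fault_diameter (T : finType) (adj : rel T) (alpha : nat) : nat :=
  \max_(u : T) \max_(v : T)
    \max_(F : {set T} | [&& u != v, u \notin F, v \notin F & #|F| == alpha])
      fdist adj F u v.

(* vertices x = x[r+s+t] ... x[1] x[0], x[i] in {0,1,2};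
   d = x[0], C = x[t..1], B = x[s+t..t+1], A = x[r+s+t..s+t+1]. *)
Definition E3C_vertex (r s t : nat) := {ffun 'I_(r + s + t).+1 -> 'I_3}.

Definition E3C_adj (r s t : nat) : rel (E3C_vertex r s t) :=
  fun x y =>
    [exists i : 'I_(r + s + t).+1,
      ([set j | x j != y j] == [set i]) &&
      [|| (i == ord0 :> 'I_(r + s + t).+1)
        , ((x ord0 : nat) == 0) && (1 <= i <= t)
        , ((x ord0 : nat) == 1) && (t < i <= s + t)
        | ((x ord0 : nat) == 2) && (s + t < i)]].

From mathcomp Require Import all_boot zify.
Set Implicit Arguments. Unset Strict Implicit. Unset Printing Implicit Defensive.

(* Let u be the vertex with A = B = C = 0 and d = 2, and w the vertex with
   A = B = C = 0 and d = 1.  The neighbours of u are the 2r + 2 vertices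
   obtained by changing d or one digit of A; removing all of them except w
   leaves w as the only exit from u.  From there, a walk to the all-ones
   vertex v must change each of the r + s + t digits of A, B, C, and it can
   only change a digit of A (resp. C) while d = 2 (resp. d = 0), so the
   last digit has to travel 1 -> 2 -> 0 -> 1 or 1 -> 0 -> 2 -> 1.  Counting
   these moves together with the first step u -> w gives r + s + t + 4; it
   is made rigorous by a potential that grows by at most one along each
   edge of the faulty graph. *)

Section FaultDistance.
Variables (T : finType) (adj : rel T) (F : {set T}) (u : T).

Lemma reach_notin k x : x \in reach adj F u k -> x \notin F.
Proof.
elim: k x => [|k IHk] x /=.
  by case: ifP => uF; rewrite ?inE // => /eqP ->; rewrite uF.
by rewrite !inE => /orP[/IHk | /andP[]].
Qed.

Variable g : T -> nat.
Hypothesis g_u : g u = 0.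
Hypothesis g_lipschitz :
  forall x y, x \notin F -> y \notin F -> adj x y -> g y <= (g x).+1.

Lemma reach_potential k x : x \in reach adj F u k -> g x <= k.
Proof.
elim: k x => [|k IHk] x /=.
  by case: ifP => uF; rewrite ?inE // => /eqP ->; rewrite g_u.
rewrite !inE => /orP[/IHk /leqW // | /andP[yF /existsP[z /andP[zr zx]]]].
apply: leq_trans (g_lipschitz (reach_notin zr) yF zx) _.
by rewrite ltnS IHk.
Qed.

Lemma potential_le_fdist v : g v <= #|T| -> g v <= fdist adj F u v.
Proof.
move=> gvT; rewrite leqNgt; apply/negP => lt_fdist.
have has_reach : has (fun k => v \in reach adj F u k) (iota 0 #|T|).
  by rewrite has_find size_iota (leq_trans lt_fdist).
have := nth_find 0 has_reach; rewrite nth_iota ?add0n -/(fdist adj F u v).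
  by move/reach_potential; rewrite leqNgt lt_fdist.
by rewrite (leq_trans lt_fdist).
Qed.

End FaultDistance.

Lemma fdist_le_fault_diameter (T : finType) (adj : rel T) (F : {set T}) u v :
  u != v -> u \notin F -> v \notin F ->
  fdist adj F u v <= fault_diameter adj #|F|.
Proof.
move=> uv uF vF; rewrite /fault_diameter.
apply: leq_trans (leq_bigmax u); apply: leq_trans (leq_bigmax v).
by apply: (leq_bigmax_cond (P := fun F' => [&& _, _, _ & _])); rewrite uv uF vF eqxx.
Qed.

Lemma subset_card_between (T : finType) (A B : {set T}) n :
  A \subset B -> #|A| <= n <= #|B| ->
  exists C : {set T}, [/\ A \subset C, C \subset B & #|C| = n].
Proof.
move=> sAB /andP[leAn]; rewrite -(subnK leAn); move: (n - #|A|) => m {leAn}.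
elim: m A sAB => [|m IHm] A sAB lenB; first by exists A.
have [x xB xA] : exists2 x, x \in B & x \notin A.
  apply/subsetPn/negP => sBA; have := subset_leq_card sBA; lia.
have sxAB : x |: A \subset B by rewrite subUset sub1set xB sAB.
have lexAB : m + #|x |: A| <= #|B| by rewrite cardsU1 xA add1n -addSnnS.
have [C [sxAC sCB cardC]] := IHm (x |: A) sxAB lexAB.
exists C; split=> //; first exact: subset_trans (subsetUr _ _) sxAC.
by rewrite cardC cardsU1 xA add1n addSnnS.
Qed.

Lemma card_hamming_neighbours (I T : finType) (x : {ffun I -> T}) (S : {set I}) :
  #|[set y : {ffun I -> T} | [exists i in S, [set j | x j != y j] == [set i]]]|
    <= #|S| * #|T|.-1.
Proof.
pose D := [set p : I * T | (p.1 \in S) && (p.2 != x p.1)].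
pose update (p : I * T) : {ffun I -> T} := [ffun j => if j == p.1 then p.2 else x j].
apply: (@leq_trans #|update @: D|).
  apply/subset_leq_card/subsetP => y; rewrite inE => /exists_inP[i iS /eqP dxy].
  have diff j : (x j != y j) = (j == i) by move/setP: dxy => /(_ j); rewrite !inE.
  apply/imsetP; exists (i, y i).
    by rewrite inE iS /=; apply/eqP => yx; move: (diff i); rewrite yx !eqxx.
  apply/ffunP => j; rewrite ffunE /=; case: eqVneq => [-> //|ji].
  by apply/esym/eqP; rewrite -[_ == _]negbK diff ji.
apply: leq_trans (leq_imset_card _ _) _.
rewrite -sum1_card (eq_bigl (fun p => (p.1 \in S) && (p.2 != x p.1))) => [|p];
  last by rewrite inE.
rewrite -(pair_big_dep (fun i => i \in S) (fun i c => c != x i) (fun _ _ => 1)) /=.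
rewrite -sum_nat_const; apply: leq_sum => i _.
by rewrite sum1_card cardC1.
Qed.

Section Support.
Variables (I T : finType) (z : T).

Definition support_on (P : pred I) (x : {ffun I -> T}) := [set j | P j & x j != z].

Variables (P : pred I) (x y : {ffun I -> T}) (i : I).
Hypothesis agree : forall j, j != i -> x j = y j.

Lemma support_on_agree : ~~ P i -> support_on P x = support_on P y.
Proof.
move=> Pi; apply/setP => j; rewrite !inE.
by case: (eqVneq j i) => [->|/agree->]; first by rewrite (negbTE Pi).
Qed.

Lemma card_support_on_agree : #|support_on P y| <= #|support_on P x|.+1.
Proof.
apply: leq_trans (_ : #|i |: support_on P x| <= _); last by rewrite cardsU1; case: (_ \notin _).
apply/subset_leq_card/subsetP => j; rewrite !inE.
by case: (eqVneq j i) => [->|/agree->]; rewrite ?eqxx.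
Qed.

End Support.

(* One plus the least number of changes of the last digit along a walk of
   digits that starts at 1, ends at d (read d >= 2 as 2), and passes
   through 2 if A holds and through 0 if C holds. *)
Definition mode_cost (d : nat) (A C : bool) : nat :=
  match d with
  | 0 => if A then 3 else 2
  | 1 => if A then (if C then 4 else 3) else (if C then 3 else 1)
  | _ => if C then 3 else 2
  end.

Lemma mode_cost_change d d' A C : mode_cost d' A C <= (mode_cost d A C).+1.
Proof. by case: d => [|[|d]]; case: d' => [|[|d']]; case: A; case: C. Qed.

Lemma mode_cost_fixed d A C A' C' :
  (d != 2 -> A' = A) -> (d != 0 -> C' = C) -> mode_cost d A' C' = mode_cost d A C.
Proof. by case: d => [|[|[|d]]] /= eA eC; rewrite ?eA ?eC. Qed.

Lemma card_ord_pred n (P : pred nat) : #|[set i : 'I_n | P i]| = count P (iota 0 n).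
Proof. by rewrite cardsE cardE /enum_mem size_filter -enumT -val_enum_ord count_map. Qed.

Section ExchangedCube.
Variables r s t : nat.
Local Notation vertex := (E3C_vertex r s t).
Local Notation adj := (@E3C_adj r s t).

Definition origin : vertex := [ffun j => if j == ord0 then ord_max else ord0].
Definition gate : vertex := [ffun j => if j == ord0 then Ordinal (isT : 1 < 3) else ord0].
Definition ones : vertex := [ffun=> Ordinal (isT : 1 < 3)].

Lemma card_vertex : #|vertex| = 3 ^ (r + s + t).+1.
Proof. by rewrite card_ffun !card_ord. Qed.

Lemma origin_neq_ones : origin != ones.
Proof. by apply/eqP => /ffunP/(_ ord0)/(congr1 val); rewrite !ffunE. Qed.

Lemma E3C_adj_agree x y : adj x y ->
  exists2 i, forall j, j != i -> x j = y j &
    [|| i == ord0, (x ord0 == 0 :> nat) && (1 <= i <= t),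
        (x ord0 == 1 :> nat) && (t < i <= s + t) | (x ord0 == 2 :> nat) && (s + t < i)].
Proof.
move=> /existsP[i /andP[/eqP diff cond]]; exists i => // j ji.
by apply/eqP; move/setP: diff => /(_ j); rewrite !inE (negbTE ji) => /negbFE.
Qed.

Lemma E3C_adj_irrefl : irreflexive adj.
Proof.
move=> x; apply/negbTE/negP => /existsP[i /andP[/eqP/setP/(_ i) diff _]].
by move: diff; rewrite !inE !eqxx.
Qed.

Lemma origin_adj_gate : adj origin gate.
Proof.
apply/existsP; exists ord0; rewrite eqxx /= andbT.
by apply/eqP/setP => j; rewrite !inE !ffunE; case: (j == ord0).
Qed.

Lemma origin_not_adj_ones : 0 < r + s + t -> ~~ adj origin ones.
Proof.
move=> n_gt0; apply/negP => /E3C_adj_agree[i agree _].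
have [i0 | i_neq0] := eqVneq i ord0.
  have : origin ord_max = ones ord_max by apply: agree; rewrite i0 -(inj_eq val_inj) /= -lt0n.
  by move/(congr1 val); rewrite !ffunE ifN // -(inj_eq val_inj) /= -lt0n.
have : origin ord0 = ones ord0 by apply: agree; rewrite eq_sym.
by move/(congr1 val); rewrite !ffunE.
Qed.

Definition origin_blocks : {set 'I_(r + s + t).+1} :=
  [set i : 'I_(r + s + t).+1 | (i == 0 :> nat) || (s + t < i)].

Lemma origin_adj_block y : adj origin y ->
  exists2 i, i \in origin_blocks & [set j | origin j != y j] == [set i].
Proof.
move=> /existsP[i /andP[diff cond]]; exists i => //.
by move: cond; rewrite inE !ffunE eqxx.
Qed.

Lemma card_origin_neighbours : #|[set y | adj origin y]| <= 2 * r.+1.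
Proof.
have sub : [set y | adj origin y] \subset
           [set y : vertex | [exists i in origin_blocks, [set j | origin j != y j] == [set i]]].
  apply/subsetP => y; rewrite !inE => /origin_adj_block[i iS diff].
  by apply/exists_inP; exists i.
apply: leq_trans (subset_leq_card sub) _; apply: leq_trans (card_hamming_neighbours _ _) _.
rewrite (card_ord_pred _ (fun k => (k == 0) || (s + t < k))) card_ord mulnC leq_mul2l /=.
rewrite -addnA (addnC r) iotaD count_cat.
rewrite [count _ (iota 1 _)](@eq_in_count _ _ pred0) => [|j]; last by rewrite mem_iota /=; lia.
rewrite [count _ (iota _ r)](@eq_in_count _ _ predT) => [|j]; last by rewrite mem_iota /=; lia.
by rewrite count_pred0 count_predT size_iota.
Qed.

Lemma origin_isolating_faults : 0 < r -> 0 < t ->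
  exists F : {set vertex}, [/\ #|F| = 2 * r + 1, origin \notin F, ones \notin F &
    forall y, adj origin y -> y \notin F -> y = gate].
Proof.
move=> r_gt0 t_gt0.
pose N := [set y | adj origin y] :\ gate.
pose B := ~: [set origin; ones].
have card_N : #|N| <= 2 * r + 1.
  have := card_origin_neighbours.
  by rewrite (cardsD1 gate) in_set origin_adj_gate -/N add1n; lia.
have sub_NB : N \subset B.
  apply/subsetP => y; rewrite !inE => /andP[_ adj_y]; rewrite negb_or; apply/andP; split.
    by apply: contraTneq adj_y => ->; rewrite E3C_adj_irrefl.
  by apply: contraTneq adj_y => ->; apply: origin_not_adj_ones; lia.
have card_B : 2 * r + 1 <= #|B|.
  have := cardsC [set origin; ones]; rewrite cards2 origin_neq_ones card_vertex -/B.
  by rewrite expnS; have := ltn_expl (r + s + t) (isT : 1 < 3); lia.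
have [F [sub_NF sub_FB card_F]] := subset_card_between sub_NB (introT andP (conj card_N card_B)).
exists F; split=> //.
- by apply: contraTN isT => /(subsetP sub_FB); rewrite !inE eqxx.
- by apply: contraTN isT => /(subsetP sub_FB); rewrite !inE eqxx orbT.
move=> y adj_y yF; apply/eqP; apply: contraNT yF => y_gate.
by apply: (subsetP sub_NF); rewrite !inE y_gate adj_y.
Qed.

Local Notation nonzero_pos := (fun j : 'I_(r + s + t).+1 => 0 < j).
Local Notation A_pos := (fun j : 'I_(r + s + t).+1 => s + t < j).
Local Notation C_pos := (fun j : 'I_(r + s + t).+1 => 0 < j <= t).

Definition potential (x : vertex) : nat :=
  if x == origin then 0 else
  #|support_on ord0 nonzero_pos x| +
  mode_cost (x ord0) (support_on ord0 A_pos x != set0)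
                     (support_on ord0 C_pos x != set0).

Lemma potential_origin : potential origin = 0.
Proof. by rewrite /potential eqxx. Qed.

Lemma potential_gate : potential gate = 1.
Proof.
have gate_origin : gate != origin by apply/eqP => /ffunP/(_ ord0)/(congr1 val); rewrite !ffunE.
have supp0 P : ~~ P ord0 -> support_on ord0 P gate = set0.
  move=> P0; apply/setP => j; rewrite !inE ffunE.
  by case: (eqVneq j ord0) => [-> | _]; rewrite ?(negbTE P0) ?eqxx ?andbF.
by rewrite /potential (negbTE gate_origin) !supp0 ?cards0 ?eqxx ?ffunE.
Qed.

Lemma potential_ones : 0 < r -> 0 < t -> potential ones = r + s + t + 4.
Proof.
move=> r_gt0 t_gt0.
have ones_origin : ones != origin by apply/eqP => /ffunP/(_ ord0)/(congr1 val); rewrite !ffunE.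
have supp_ones P : support_on ord0 P ones = [set j | P j].
  by apply/setP => j; rewrite !inE ffunE andbT.
have one_lt : 1 < (r + s + t).+1 by lia.
have A_ones : support_on ord0 A_pos ones != set0.
  by apply/set0Pn; exists ord_max; rewrite supp_ones inE /=; lia.
have C_ones : support_on ord0 C_pos ones != set0.
  by apply/set0Pn; exists (Ordinal one_lt); rewrite supp_ones inE /=; lia.
have card_pos : #|support_on ord0 nonzero_pos ones| = r + s + t.
  rewrite supp_ones (_ : [set j | _] = [set~ ord0]) ?cardsC1 ?card_ord //.
  by apply/setP => j; rewrite !inE -(inj_eq val_inj) /= lt0n.
by rewrite /potential (negbTE ones_origin) card_pos A_ones C_ones ffunE.
Qed.

Lemma potential_step x y :
  adj x y -> (x = origin -> y = gate) -> potential y <= (potential x).+1.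
Proof.
move=> /E3C_adj_agree[i agree cond] origin_gate.
have [x_eq | x_origin] := eqVneq x origin; first by rewrite (origin_gate x_eq) potential_gate.
have [-> | y_origin] := eqVneq y origin; first by rewrite potential_origin.
rewrite /potential (negbTE x_origin) (negbTE y_origin).
have [i0 | i_neq0] := eqVneq i ord0.
  subst i; rewrite -(support_on_agree ord0 agree (P := nonzero_pos)) //.
  rewrite -(support_on_agree ord0 agree (P := A_pos)) //.
  rewrite -(support_on_agree ord0 agree (P := C_pos)) //.
  have := mode_cost_change (x ord0) (y ord0) (support_on ord0 A_pos x != set0)
                                            (support_on ord0 C_pos x != set0).
  lia.
have -> : y ord0 = x ord0 by rewrite agree // eq_sym.
have [A_fixed C_fixed] :
    (x ord0 != 2 :> nat -> ~~ (s + t < i)) /\ (x ord0 != 0 :> nat -> ~~ (0 < i <= t)).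
  case/or4P: cond i_neq0 => [/eqP-> | /andP[/eqP-> ?] | /andP[/eqP-> ?] | /andP[/eqP-> ?]];
    rewrite ?eqxx //; split=> // _; lia.
rewrite (mode_cost_fixed (A := support_on ord0 A_pos x != set0)
                         (C := support_on ord0 C_pos x != set0)).
- by have := card_support_on_agree ord0 nonzero_pos agree; lia.
- by move/A_fixed/(support_on_agree ord0 agree (P := A_pos))->.
- by move/C_fixed/(support_on_agree ord0 agree (P := C_pos))->.
Qed.
End ExchangedCube.

Theorem theorem1 (r s t : nat) :
  1 <= r -> r <= s -> s <= t ->
  (r + s + t + 1) + 3 <= fault_diameter (@E3C_adj r s t) (2 * r + 1).
Proof.
move=> r_gt0 r_le_s s_le_t; have t_gt0 : 0 < t by lia.
have [F [card_F originF onesF gate_exit]] := @origin_isolating_faults r s t r_gt0 t_gt0.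
have pot_ones := @potential_ones r s t r_gt0 t_gt0.
rewrite -card_F -addnA -pot_ones.
apply: leq_trans _ (fdist_le_fault_diameter _ (origin_neq_ones r s t) originF onesF).
apply: (@potential_le_fdist _ _ F (origin r s t) (@potential r s t)).
- exact: potential_origin.
- move=> x y _ yF xy; apply: (potential_step xy) => x_origin; subst x.
  exact: gate_exit.
- rewrite pot_ones card_vertex expnS.
  by have := ltn_expl (r + s + t) (isT : 1 < 3); lia.
Qed.
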